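(* Let $d \ge 1$ and let $T^{(1)}$ be a one-layer Transformer as described in the context, with Lipschitz MLP $\psi:\mathbb{R}^d\to\mathbb{R}^d$ and attention scores satisfying the uniform bounded-difference condition with constant $\delta$. Fix $k \ge 0$, prefix vectors $\mathbf{v}_1,\dots,\mathbf{v}_k \in \mathbb{R}^d$ and a vector $\mathbf{v}\in\mathbb{R}^d$ (all taken from a finite vocabulary of token vectors). For $n \ge 1$ let $S_n = (\mathbf{v}_1,\dots,\mathbf{v}_k,\underbrace{\mathbf{v},\dots,\mathbf{v}}_{n \text{ times}})$, a sequence of length $n+k$, and let $S^* = (\mathbf{v})$ be the sequence of length one. Then $$\lim_{n\to\infty}\left\lVert T^{(1)}(S_n)_{n+k} - T^{(1)}(S^* )_1\right\rVert = 0.$$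
   Context: Model. Tokens are represented by vectors in $\mathbb{R}^d$ drawn from a finite vocabulary. A (decoder, causally masked) Transformer layer $T^{(\ell)}$ maps an input sequence $S=(\mathbf{v}_1,\dots,\mathbf{v}_m)$ to the output sequence $T^{(\ell)}(S)=(\mathbf{v}'_1,\dots,\mathbf{v}'_m)$ given by $$\mathbf{z}_i = \sum_{j\le i}\alpha_{i,j}\mathbf{v}_j + \mathbf{v}_i,\qquad \mathbf{v}'_i = \psi(\mathbf{z}_i)+\mathbf{z}_i,$$ where $\psi:\mathbb{R}^d\to\mathbb{R}^d$ is an MLP assumed Lipschitz continuous, and the attention coefficients are $\alpha_{i,j} = \exp(s_{i,j})/\sum_{j'\le i}\exp(s_{i,j'})$ for $j\le i$, with scores $s_{i,j}$ computed from queries and keys of tokens $i$ and $j$ (possibly with a bounded positional encoding, such as RoPE, acting only on queries and keys). Standing assumption: there is a constant $\delta$, independent of the sequence and its length, such that $|s_{i,j}-s_{i,j'}|\le\delta$ for all $i$ and all $j,j'\le i$; consequently $\alpha_{i,j}\le e^{\delta}/i$. $T^{(\ell)}(S)_i$ denotes the $i$-th element of the output sequence, and $\lVert\cdot\rVert$ is the Euclidean norm. *)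

From HB Require Import structures.
From mathcomp Require Import all_boot all_order all_algebra.
From mathcomp Require Import all_classical all_reals all_analysis.
Set Implicit Arguments. Unset Strict Implicit. Unset Printing Implicit Defensive.
Import Order.TTheory GRing.Theory Num.Theory.
Local Open Scope ring_scope.

Section Transformer.
Variables (R : realType) (d : nat).

Definition enorm (x : 'rV[R]_d) : R := Num.sqrt (\sum_(i < d) (x 0 i) ^+ 2).

Definition elipschitz (psi : 'rV[R]_d -> 'rV[R]_d) : Prop :=
  exists L : R, forall x y, enorm (psi x - psi y) <= L * enorm (x - y).

(* Token at 1-based position j of the sequence S. *)
Definition tok (S : seq 'rV[R]_d) (j : nat) : 'rV[R]_d := nth 0 S j.-1.

(* Attention scores: score i j q k is the score s_{i,j} of query position i
   (carrying token q) against key position j (carrying token k); positions are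
   1-based, so (bounded) positional encodings such as RoPE are covered. *)
Variable score : nat -> nat -> 'rV[R]_d -> 'rV[R]_d -> R.

Definition alpha (S : seq 'rV[R]_d) (i j : nat) : R :=
  expR (score i j (tok S i) (tok S j)) /
  \sum_(1 <= j' < i.+1) expR (score i j' (tok S i) (tok S j')).

Definition zvec (S : seq 'rV[R]_d) (i : nat) : 'rV[R]_d :=
  \sum_(1 <= j < i.+1) alpha S i j *: tok S j + tok S i.

Variable psi : 'rV[R]_d -> 'rV[R]_d.

Definition layer_out (S : seq 'rV[R]_d) (i : nat) : 'rV[R]_d :=
  psi (zvec S i) + zvec S i.

End Transformer.

From HB Require Import structures.
From mathcomp Require Import all_boot all_order all_algebra.
From mathcomp Require Import all_classical all_reals all_analysis.
From mathcomp Require Import zify.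
Set Implicit Arguments.
Unset Strict Implicit.
Unset Printing Implicit Defensive.
Import Order.TTheory GRing.Theory Num.Theory.
Local Open Scope ring_scope.

(* Bounded score differences give alpha_{i,j} <= e^delta / i. At the last
   position N = n + 1 + k of S_n the token is v, so z_N - 2v is the
   alpha-weighted sum of the v_j - v, in which only the k prefix terms are
   nonzero: z_N tends to 2v, the z of S^*, at rate O(1/N), and the Lipschitz
   MLP carries this over to the outputs. Estimates are done in the max norm of
   matrices, which is equivalent to the Euclidean norm. *)

Section EuclideanNorm.
Variables (R : realType) (d : nat).
Implicit Types x y : 'rV[R]_d.

Lemma coord_le_enorm x i : `|x 0 i| <= enorm x.
Proof.
rewrite /enorm -sqrtr_sqr ler_sqrt; last by apply: sumr_ge0 => j _; exact: sqr_ge0.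
rewrite (bigD1 i) //= lerDl; apply: sumr_ge0 => j _; exact: sqr_ge0.
Qed.

Lemma coord_le_mx_norm x i : `|x 0 i| <= `|x|.
Proof. by rewrite [leRHS]/Num.Def.normr /= mx_normrE (le_bigmax _ _ (0, i)). Qed.

Lemma mx_norm_le_enorm x : `|x| <= enorm x.
Proof.
rewrite [leLHS]/Num.Def.normr /= mx_normrE; apply: bigmax_le => [|[i j] _].
  exact: sqrtr_ge0.
by rewrite ord1; exact: coord_le_enorm.
Qed.

Lemma enorm_le_mx_norm x : enorm x <= d%:R * `|x|.
Proof.
rewrite /enorm -(ger0_norm (mulr_ge0 (ler0n _ d) (normr_ge0 x))) -sqrtr_sqr.
rewrite ler_sqrt ?sqr_ge0 //.
apply: (@le_trans _ _ (\sum_(i < d) `|x| ^+ 2)).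
  apply: ler_sum => i _; rewrite -real_normK ?num_real // lerXn2r ?nnegrE //.
  exact: coord_le_mx_norm.
rewrite sumr_const card_ord -[leLHS]mulr_natr exprMn [leRHS]mulrC.
rewrite ler_wpM2l ?sqr_ge0 //.
by rewrite -natrX ler_nat; case: d => // n; rewrite leq_pmull.
Qed.

Lemma elipschitz_mx_norm (psi : 'rV[R]_d -> 'rV[R]_d) : elipschitz psi ->
  exists2 L : R, 0 <= L & forall x y, `|psi x - psi y| <= L * `|x - y|.
Proof.
case=> L hL; exists (`|L| * d%:R) => [|x y]; first exact: mulr_ge0.
apply: (le_trans (mx_norm_le_enorm _)); apply: (le_trans (hL x y)).
rewrite -mulrA; apply: (le_trans (ler_norm _)); rewrite normrM ler_wpM2l //.
by rewrite ger0_norm ?sqrtr_ge0 // enorm_le_mx_norm.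
Qed.

End EuclideanNorm.

Section Tokens.
Variables (R : realType) (d : nat).
Implicit Types (S : seq 'rV[R]_d) (v : 'rV[R]_d).

Lemma mem_tok S j : (1 <= j <= size S)%N -> tok S j \in S.
Proof. by case: j => // j /andP[_ hj]; exact: mem_nth. Qed.

Lemma tok_cat_nseq_last S v n : tok (S ++ nseq n.+1 v) (n.+1 + size S) = v.
Proof.
by rewrite /tok addSn -pred_Sn nth_cat ltnNge leq_addl addnK nth_nseq ltnSn.
Qed.

Lemma sum_dist_tok_cat_nseq S v n :
  \sum_(1 <= j < (n.+1 + size S).+1) `|tok (S ++ nseq n.+1 v) j - v| =
  \sum_(1 <= j < (size S).+1) `|tok S j - v|.
Proof.
set T := nseq n.+1 v.
rewrite (@big_cat_nat _ _ _ (size S).+1) //=; last by lia.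
have -> : \sum_((size S).+1 <= j < (n.+1 + size S).+1) `|tok (S ++ T) j - v| = 0.
  rewrite big_nat big1 // => -[|j] /andP[hj hjN] //.
  rewrite /tok -pred_Sn nth_cat ifN /T ?nth_nseq ?ifT ?subrr ?normr0 //.
  (* the two [size S] live at convertible but distinct types, which lia
     would treat as different atoms *)
  1-2: move: hj hjN; set s := size S; lia.
rewrite addr0 !big_nat; apply: eq_bigr => -[|j] /andP[hj hjS] //.
by rewrite /tok -pred_Sn nth_cat ifT.
Qed.

End Tokens.

Section Attention.
Variables (R : realType) (d : nat).
Variable score : nat -> nat -> 'rV[R]_d -> 'rV[R]_d -> R.
Implicit Types (S : seq 'rV[R]_d) (i j : nat).

Lemma alpha_denom_gt0 S i : (0 < i)%N ->
  0 < \sum_(1 <= j < i.+1) expR (score i j (tok S i) (tok S j)).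
Proof.
move=> i_gt0; rewrite big_nat_recl // ltr_pwDl ?expR_gt0 //.
by apply: sumr_ge0 => j _; exact: expR_ge0.
Qed.

Lemma alpha_ge0 S i j : 0 <= alpha score S i j.
Proof.
by rewrite /alpha divr_ge0 ?expR_ge0 // sumr_ge0 // => j' _; exact: expR_ge0.
Qed.

Lemma sum_alpha S i : (0 < i)%N -> \sum_(1 <= j < i.+1) alpha score S i j = 1.
Proof.
by move=> i_gt0; rewrite /alpha -mulr_suml divff // gt_eqF ?alpha_denom_gt0.
Qed.

Lemma zvec_sub_double S i : (0 < i)%N ->
  zvec score S i - (tok S i + tok S i) =
  \sum_(1 <= j < i.+1) alpha score S i j *: (tok S j - tok S i).
Proof.
move=> i_gt0; rewrite /zvec opprD addrA addrK.
apply/esym; under eq_bigr do rewrite scalerBr.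
by rewrite sumrB -scaler_suml sum_alpha // scale1r.
Qed.

Lemma zvec_singleton (v : 'rV[R]_d) : zvec score [:: v] 1 = v + v.
Proof.
by rewrite /zvec !big_nat1 /alpha big_nat1 divff ?scale1r // gt_eqF ?expR_gt0.
Qed.

Lemma norm_layer_out_sub psi (L : R) S S' i i' :
  (forall x y, `|psi x - psi y| <= L * `|x - y|) ->
  `|layer_out score psi S i - layer_out score psi S' i'| <=
  (L + 1) * `|zvec score S i - zvec score S' i'|.
Proof.
move=> hpsi; rewrite /layer_out opprD addrACA mulrDl mul1r.
by apply: le_trans (ler_normD _ _) _; rewrite lerD2r.
Qed.

Variables (V : seq 'rV[R]_d) (delta : R).
Hypothesis score_bounded_diff : forall (i j j' : nat) (q w w' : 'rV[R]_d),
  q \in V -> w \in V -> w' \in V ->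
  (1 <= j <= i)%N -> (1 <= j' <= i)%N -> `|score i j q w - score i j' q w'| <= delta.

Lemma alpha_le S i j : all (mem V) S -> (i <= size S)%N -> (1 <= j <= i)%N ->
  alpha score S i j <= expR delta / i%:R.
Proof.
move=> S_V i_le j_le; have i_gt0 : (0 < i)%N by lia.
have tokV l : (1 <= l <= i)%N -> tok S l \in V.
  by move=> l_le; apply: (allP S_V); apply: mem_tok; lia.
set s := score i j (tok S i) (tok S j).
have denom_ge : i%:R * expR (s - delta) <=
    \sum_(1 <= j' < i.+1) expR (score i j' (tok S i) (tok S j')).
  have -> : i%:R * expR (s - delta) = \sum_(1 <= j' < i.+1) expR (s - delta).
    by rewrite sumr_const_nat subSS subn0 mulr_natl.
  rewrite !big_nat; apply: ler_sum => j' j'_le.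
  rewrite ler_expR lerBlDl -lerBlDr; apply: le_trans (ler_norm _) _.
  by apply: score_bounded_diff; rewrite ?tokV // i_gt0 leqnn.
rewrite /alpha ler_pdivrMr ?alpha_denom_gt0 //.
apply: le_trans (ler_wpM2l _ denom_ge); last by rewrite divr_ge0 ?expR_ge0.
rewrite mulrA divfK ?pnatr_eq0 -?lt0n // expRB mulrC divfK //.
by rewrite gt_eqF ?expR_gt0.
Qed.

Lemma norm_zvec_sub_double S i : all (mem V) S -> (0 < i <= size S)%N ->
  `|zvec score S i - (tok S i + tok S i)| <=
  expR delta / i%:R * \sum_(1 <= j < i.+1) `|tok S j - tok S i|.
Proof.
move=> S_V /andP[i_gt0 i_le]; rewrite zvec_sub_double // mulr_sumr.
apply: le_trans (ler_norm_sum _ _ _) _; rewrite !big_nat ler_sum // => j j_le.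
by rewrite normrZ ger0_norm ?alpha_ge0 // ler_wpM2r // alpha_le.
Qed.

Lemma norm_zvec_cat_nseq_sub S v n : all (mem V) S -> v \in V ->
  `|zvec score (S ++ nseq n.+1 v) (n.+1 + size S) - (v + v)| <=
  expR delta / (n.+1 + size S)%:R * \sum_(1 <= j < (size S).+1) `|tok S j - v|.
Proof.
move=> S_V v_V; have := @norm_zvec_sub_double (S ++ nseq n.+1 v) (n.+1 + size S).
rewrite tok_cat_nseq_last sum_dist_tok_cat_nseq; apply.
  by rewrite all_cat S_V all_nseq; apply/orP; right.
by rewrite size_cat size_nseq addnC addnS leqnn.
Qed.

End Attention.

Local Open Scope classical_set_scope.

Lemma cvg0_le_harmonic (R : realType) (u : nat -> R) (C : R) :
  (forall n, 0 <= u n <= C / n.+1%:R) -> u @ \oo --> (0 : R^o).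
Proof.
move=> u_le; apply: (@squeeze_cvgr _ _ _ _ (fun=> 0) (fun n => C * harmonic n)).
- exact: nearW.
- exact: (cvg_cst (0 : R^o)).
- by rewrite -(mulr0 C); exact: cvgMl_tmp cvg_harmonic.
Qed.

Theorem lemma1 (R : realType) (d : nat) (hd : (1 <= d)%N)
  (V : seq 'rV[R]_d)
  (psi : 'rV[R]_d -> 'rV[R]_d) (hpsi : elipschitz psi)
  (score : nat -> nat -> 'rV[R]_d -> 'rV[R]_d -> R) (delta : R)
  (hdelta : forall (i j j' : nat) (q w w' : 'rV[R]_d),
      q \in V -> w \in V -> w' \in V ->
      (1 <= j <= i)%N -> (1 <= j' <= i)%N ->
      `|score i j q w - score i j' q w'| <= delta)
  (k : nat) (pre : seq 'rV[R]_d) (hk : size pre = k) (hpre : all (mem V) pre)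
  (v : 'rV[R]_d) (hv : v \in V) :
  (fun n : nat =>
     enorm (layer_out score psi (pre ++ nseq n.+1 v) (n.+1 + k)%N
            - layer_out score psi [:: v] 1%N)) @ \oo --> (0%R : R^o).
Proof.
subst k; have [L L_ge0 hL] := elipschitz_mx_norm hpsi.
apply: (@cvg0_le_harmonic _ _
  (d%:R * (L + 1) * (expR delta * \sum_(1 <= j < (size pre).+1) `|tok pre j - v|))).
move=> n; rewrite sqrtr_ge0 /=.
apply: le_trans (enorm_le_mx_norm _) _; rewrite -!mulrA ler_wpM2l //.
apply: le_trans (norm_layer_out_sub _ _ _ _ _ hL) _.
rewrite ler_wpM2l ?addr_ge0 // zvec_singleton.
apply: le_trans (norm_zvec_cat_nseq_sub hdelta n hpre hv) _.
rewrite mulrAC -mulrA ler_wpM2l ?expR_ge0 // ler_wpM2l ?sumr_ge0 //.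
by rewrite lef_pV2 ?posrE ?ltr0n // ler_nat leq_addr.
Qed.
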